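(* Let $n\ge 2$ be an integer, let $\pi(x)$ denote the number of primes $\le x$ for real $x\ge 0$, and let $\omega(n)$ denote the number of distinct prime factors of $n$. Then $$\omega(n)=\sum_{i=1}^{\lfloor n/2\rfloor}\left[\pi\left(\frac{n}{i}\right)-\pi\left(\frac{n-1}{i}\right)\right].$$ *)

From mathcomp Require Import all_boot all_order all_algebra.
From mathcomp Require Import reals.
Set Implicit Arguments. Unset Strict Implicit. Unset Printing Implicit Defensive.
Import Order.TTheory GRing.Theory Num.Theory.
Local Open Scope ring_scope.

(* Since p <= x iff p <= floor x
   for naturals p (and x >= 0), this counts primes p < (truncn x).+1. *)
Definition primepi {R : archiFieldType} (x : R) : nat :=
  #|[set p : 'I_(Num.truncn x).+1 | prime p]|.

Definition omega (n : nat) : nat := size (primes n).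

From mathcomp Require Import all_boot all_order all_algebra.
From mathcomp Require Import reals.
Import Order.TTheory GRing.Theory Num.Theory.
Local Open Scope ring_scope.

(* Since π only depends on the integer part of its argument, the i-th summand
   is π(⌊n/i⌋) - π(⌊(n-1)/i⌋).  The floors differ only when i | n, and then the
   summand is 1 exactly when n/i is prime.  The map p ↦ n/p is a bijection from
   the prime divisors of n onto these i, which all lie in [1, n/2] as p ≥ 2. *)

Definition primepi_nat (k : nat) : nat := #|[set p : 'I_k.+1 | prime p]|.

Lemma primepi_natE (k : nat) : primepi_nat k = count prime (iota 0 k.+1).
Proof.
rewrite /primepi_nat -sum1dep_card.
by rewrite -(big_mkord (fun p : nat => prime p) (fun=> 1%N)) sum1_count.
Qed.

Lemma primepi_natS (k : nat) : primepi_nat k.+1 = (primepi_nat k + prime k.+1)%N.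
Proof. by rewrite !primepi_natE -addn1 iotaD count_cat /= addn0. Qed.

Lemma truncn_ratio_nat (R : archiRealFieldType) (m d : nat) : (0 < d)%N ->
  Num.truncn (m%:R / d%:R : R) = (m %/ d)%N.
Proof.
move=> d_gt0; apply: truncn_def.
have d_pos : (0 : R) < d%:R by rewrite ltr0n.
rewrite ler_pdivlMr // ltr_pdivrMr // -!natrM ler_nat ltr_nat.
by rewrite leq_divM ltn_ceil.
Qed.

Lemma primepi_ratio_nat (R : archiRealFieldType) (m d : nat) : (0 < d)%N ->
  primepi (m%:R / d%:R : R) = primepi_nat (m %/ d).
Proof. by move=> d_gt0; rewrite /primepi truncn_ratio_nat. Qed.

Lemma primepi_nat_divS (m d : nat) : (0 < d)%N ->
  (primepi_nat (m.+1 %/ d))%:Z - (primepi_nat (m %/ d))%:Z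
  = (((d %| m.+1) && prime (m.+1 %/ d))%N : nat)%:Z.
Proof.
move=> d_gt0; rewrite (divnS _ d_gt0).
case: (d %| m.+1)%N => /=; last by rewrite add0n subrr.
by rewrite add1n primepi_natS addnC PoszD addrK.
Qed.

Lemma primepi_ratio_jump (R : archiRealFieldType) (n d : nat) : (0 < n)%N -> (0 < d)%N ->
  (primepi (n%:R / d%:R : R))%:Z - (primepi ((n%:R - 1) / d%:R : R))%:Z
  = (((d %| n) && prime (n %/ d))%N : nat)%:Z.
Proof.
case: n => // m _ d_gt0.
have -> : (m.+1%:R - 1 : R) = m%:R by rewrite -natr1 addrK.
by rewrite !primepi_ratio_nat // primepi_nat_divS.
Qed.

Lemma divn_cofactor {n d : nat} : (0 < n)%N -> (d %| n)%N -> (n %/ (n %/ d))%N = d.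
Proof. by move=> n_gt0 d_dvd_n; rewrite divnA // mulKn. Qed.

Lemma count_prime_cofactors {n : nat} : (0 < n)%N ->
  count (fun d => (d %| n) && prime (n %/ d))%N (iota 1 (n %/ 2)) = omega n.
Proof.
move=> n_gt0; set P := (fun d => _).
rewrite /omega -size_filter -(size_map (fun d => n %/ d)%N).
apply/perm_size/uniq_perm; [|exact: primes_uniq|].
- rewrite map_inj_in_uniq ?filter_uniq ?iota_uniq // => d e.
  rewrite !mem_filter => /andP[/andP[d_dvd _] _] /andP[/andP[e_dvd _] _] eq_de.
  by rewrite -(divn_cofactor n_gt0 d_dvd) eq_de divn_cofactor.
- move=> p; rewrite mem_primes n_gt0 /=; apply/mapP/idP.
  + case=> d; rewrite mem_filter => /andP[/andP[d_dvd pr_q] _] ->.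
    by rewrite pr_q dvdn_div.
  + case/andP=> pr_p p_dvd; exists (n %/ p)%N; last by rewrite divn_cofactor.
    have p_gt1 := prime_gt1 pr_p; have p_gt0 := ltnW p_gt1.
    rewrite mem_filter /P divn_cofactor // pr_p dvdn_div // mem_iota /=.
    by rewrite divn_gt0 // dvdn_leq //= add1n ltnS leq_div2l.
Qed.

Theorem mainTheorem5 (R : realType) (n : nat) (hn : (2 <= n)%N) :
  (omega n)%:Z =
  \sum_(1 <= i < (n %/ 2).+1)
     ((primepi (n%:R / i%:R : R))%:Z - (primepi ((n%:R - 1) / i%:R : R))%:Z).
Proof.
have n_gt0 : (0 < n)%N by apply: leq_trans hn.
rewrite big_nat (eq_bigr (fun i => (((i %| n) && prime (n %/ i))%N : nat)%:Z)).
  rewrite -big_nat -(count_prime_cofactors n_gt0) -sum1_count big_mkcond /=.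
  rewrite /index_iota subSS subn0 (big_morph Posz PoszD (erefl (Posz 0))).
  by apply: eq_bigr => i _; case: ifP.
by move=> i /andP[i_gt0 _]; rewrite primepi_ratio_jump.
Qed.
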